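(* Let $\rho\ge\chi>0$. The linear search strategy driven by a $(\rho,\chi)$-excursion profile $G_\pm$ is $(1+2\rho)$-robust and $(1+2\chi)$-consistent.
   Context: Linear search: an unknown target $T\in\mathbb{R}\setminus\{0\}$; a searcher starts at the origin and performs excursions: in an excursion to a signed endpoint $z\neq0$ it moves from the origin toward $z$, stops immediately if it reaches the target, and otherwise returns to the origin. The cost is the total distance traveled until termination. The prediction is normalized to $+1$. A deterministic strategy is a bi-infinite sequence $(y_n)_{n\in\mathbb{Z}}$ of nonzero reals with $\mathrm{sgn}(y_n)\ne\mathrm{sgn}(y_{n+1})$ and $|y_n|<|y_{n+2}|$ for all $n$; its cost on $T$ is $|T|+2\sum_{n<n_*}|y_n|$ with $n_*=\min\{n:\mathrm{sgn}(y_n)=\mathrm{sgn}(T),\ |y_n|\ge|T|\}$. A randomized strategy $Y$ is a distribution over deterministic strategies with expected cost $\mathrm{cost}_Y(T)$; it is $\rho$-robust if $\mathrm{cost}_Y(T)\le\rho|T|$ for all $T\ne0$, and $\chi$-consistent if $\mathrm{cost}_Y(+1)\le\chi$. For $\rho\ge\chi>0$, a $(\rho,\chi)$-excursion profile is a pair $G_\pm=(G_+,G_-)$ of non-decreasing, left-continuous functions $G_+,G_-:\mathbb{R}\to(0,\infty)$ such that (plus-offset) $G_+(x)\ge1$ for $x>0$ and $G_+(x)<1$ for $x<0$; (robustness) $C_+(x)\le\rho G_+(x)$ and $C_-(x)\le\rho G_-(x)$ for all $x\in\mathbb{R}$; (consistency) $C_+(0)\le\chi$; where $C_+(x):=\int_{-\infty}^{x}G_+(t)\,\mathrm{d}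 t+\int_{-\infty}^{x}G_-(t)\,\mathrm{d} t$ and $C_-(x):=\int_{-\infty}^{x+1}G_+(t)\,\mathrm{d} t+\int_{-\infty}^{x}G_-(t)\,\mathrm{d} t$. The strategy driven by $G_\pm$ uses a single $U\sim\mathrm{Unif}(0,1]$ and the excursion sequence $\cdots\to+G_+(n+U)\to-G_-(n+U)\to+G_+(n+1+U)\to-G_-(n+1+U)\to\cdots$. *)

From HB Require Import structures.
From mathcomp Require Import all_boot all_order all_algebra.
From mathcomp Require Import all_classical all_reals all_analysis.
Set Implicit Arguments. Unset Strict Implicit. Unset Printing Implicit Defensive.
Import Order.TTheory GRing.Theory Num.Theory.
Import numFieldNormedType.Exports.
Local Open Scope classical_set_scope.
Local Open Scope ring_scope.

Section LinearSearch.
Variable R : realType.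

(* A deterministic strategy is a bi-infinite sequence y : int -> R.
   Excursion n "finds" T iff sgn(y n) = sgn T and |y n| >= |T|. *)
Definition finds (y : int -> R) (T : R) (n : int) : Prop :=
  Num.sg (y n) = Num.sg T /\ `|T| <= `|y n|.

(* n < n_* (n_* = min {n | finds y T n}) iff no m <= n finds T. *)
Definition before_hit (y : int -> R) (T : R) (n : int) : Prop :=
  forall m : int, (m <= n)%R -> ~ finds y T m.

Definition det_cost (y : int -> R) (T : R) : \bar R :=
  (`|T|%:E + 2%:E * \esum_(n in [set n : int | before_hit y T n]) (`|y n|)%:E)%E.

(* Strategy driven by G_+, G_- with U = u :
   ... -> +G_+(n+u) -> -G_-(n+u) -> +G_+(n+1+u) -> ...
   index 2n |-> +G_+(n+u), index 2n+1 |-> -G_-(n+u). *)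
Definition driven_seq (Gp Gm : R -> R) (u : R) (k : int) : R :=
  if (k %% 2)%Z == 0 then Gp ((k %/ 2)%Z%:~R + u)
  else - Gm ((k %/ 2)%Z%:~R + u).

Definition driven_cost (Gp Gm : R -> R) (T : R) : \bar R :=
  (\int[@lebesgue_measure R]_(u in `]0%R, 1%R]) det_cost (driven_seq Gp Gm u) T)%E.

Definition robust (cost : R -> \bar R) (rho : R) : Prop :=
  forall T : R, T != 0 -> (cost T <= (rho * `|T|)%:E)%E.

Definition consistent (cost : R -> \bar R) (chi : R) : Prop :=
  (cost 1%R <= chi%:E)%E.

Definition Cplus (Gp Gm : R -> R) (x : R) : \bar R :=
  (\int[@lebesgue_measure R]_(t in `]-oo, x%R]) (Gp t)%:E
   + \int[@lebesgue_measure R]_(t in `]-oo, x%R]) (Gm t)%:E)%E.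

Definition Cminus (Gp Gm : R -> R) (x : R) : \bar R :=
  (\int[@lebesgue_measure R]_(t in `]-oo, (x + 1)%R]) (Gp t)%:E
   + \int[@lebesgue_measure R]_(t in `]-oo, x%R]) (Gm t)%:E)%E.

Definition left_continuous (G : R -> R) : Prop :=
  forall x : R, G t @[t --> x^'-] --> G x.

Definition excursion_profile (rho chi : R) (Gp Gm : R -> R) : Prop :=
  ({homo Gp : x y / x <= y} /\ {homo Gm : x y / x <= y}) /\
  (left_continuous Gp /\ left_continuous Gm) /\
  ((forall x, 0 < Gp x) /\ (forall x, 0 < Gm x)) /\
  ((forall x, 0 < x -> 1 <= Gp x) /\ (forall x, x < 0 -> Gp x < 1)) /\
  (forall x, (Cplus Gp Gm x <= (rho * Gp x)%:E)%E /\
             (Cminus Gp Gm x <= (rho * Gm x)%:E)%E) /\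
  (Cplus Gp Gm 0%R <= chi%:E)%E.

End LinearSearch.

(* Before the target is found, every excursion on the side of T is
   shorter than |T|; since G+ (for T > 0) or G- (for T < 0) is nondecreasing, its position
   n + u lies below a := sup {x | G x < |T|}, and G a <= |T| by left-continuity.  The
   excursions to the other side alternate with these, so they stay below a as well (below
   a + 1 for the G+ excursions when T < 0).  Averaging over u ~ Unif(0,1] turns the sum
   over the lattice (u + Z) /\ (-oo, a] into the integral over (-oo, a], so the expected
   cost is at most |T| + 2 C+(a) (resp. |T| + 2 C-(a)), which robustness of the profile
   bounds by |T| + 2 rho G(a) <= (1 + 2 rho) |T|.  For T = 1 the plus-offset gives a = 0,
   and consistency gives 1 + 2 chi. *)

From mathcomp Require Import all_boot all_order all_algebra.
From mathcomp Require Import all_classical all_reals all_analysis.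
From mathcomp Require Import measurable_realfun ring lra zify.
Set Implicit Arguments. Unset Strict Implicit. Unset Printing Implicit Defensive.
Import Order.TTheory GRing.Theory Num.Theory.
Import numFieldNormedType.Exports.
Local Open Scope classical_set_scope.
Local Open Scope ring_scope.

Section ge0_le_integral_nonmeasurable.
Context d (T : measurableType d) (R : realType) (mu : {measure set T -> \bar R}).

Lemma ge0_le_integral_nonmeasurable (D : set T) (f g : T -> \bar R) :
  (forall x, D x -> (0 <= f x)%E) -> (forall x, D x -> (f x <= g x)%E) ->
  (\int[mu]_(x in D) f x <= \int[mu]_(x in D) g x)%E.
Proof.
move=> f0 fg.
have g0 x : D x -> (0 <= g x)%E by move=> Dx; exact: le_trans (f0 x Dx) (fg x Dx).
rewrite !ge0_integralE//; apply: le_ereal_sup => _ [h /= hf <-]; exists h => //= x.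
apply: le_trans (hf x) _; rewrite /patch; case: ifPn => // /[!inE] Dx; exact: fg.
Qed.

End ge0_le_integral_nonmeasurable.

Local Notation cut G a := ((fun x => (G x)%:E) \_ `]-oo, a]).

Section lattice_sums.
Variable R : realType.
Local Notation mu := (@lebesgue_measure R).

Lemma measurable_addr (c : R) :
  measurable_fun [set: measurableTypeR R]
    ((fun u => u + c) : measurableTypeR R -> measurableTypeR R).
Proof. by apply: measurable_funD => //; exact: measurable_id. Qed.

Lemma ge0_integral_translate (h : R -> \bar R) (a b c : R) :
  measurable_fun [set: R] h -> (forall x, (0 <= h x)%E) ->
  (\int[mu]_(u in `]a, b]) h (u + c)%R = \int[mu]_(x in `](a + c)%R, (b + c)%R]) h x)%E.
Proof.
move=> mh h0.
have preimage_itv (a' b' : R) :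
    (fun u => u + c) @^-1` `]a', b']%classic = `](a' - c), (b' - c)]%classic :> set R.
  by apply/seteqP; split => x /=; rewrite !in_itv/= => /andP[? ?]; apply/andP; split; lra.
have := ge0_integral_pushforward (measurable_addr c) mu (measurable_itv `](a + c), (b + c)])
  (measurable_funS measurableT (@subsetT _ _) mh) (fun y _ => h0 y).
rewrite preimage_itv !addrK => <-.
apply: eq_measure_integral => [|? A mA _]; first exact: measurable_addr.
apply/esym/lebesgue_measure_unique => // _ [[a' b'] _ <-] /=.
rewrite /pushforward preimage_itv !lebesgue_measure_itv/= !lte_fin ltrBrDr subrK.
by case: ifPn => // _; congr (_%:E); lra.
Qed.

Lemma measurable_comp_addr (h : R -> \bar R) (c : R) (D : set R) :
  measurable_fun [set: R] h -> measurable_fun D (fun u => h (u + c)).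
Proof.
move=> mh; apply: measurable_funS (@subsetT _ _) _ => //.
exact: measurableT_comp mh (measurable_addr c).
Qed.

Definition lattice_sum_below (h : R -> \bar R) (M u : R) : \bar R :=
  (\sum_(j <oo) h (u + (M - j.+1%:R))%R)%E.

Lemma bigcup_unit_itv_below (M : R) :
  \bigcup_j `](M - j.+1%:R), (M - j%:R)]%classic = `]-oo, M]%classic :> set R.
Proof.
apply/seteqP; split => x /=.
  by move=> [j _]; rewrite /= !in_itv/= => /andP[_ xj]; have := ler0n R j; lra.
rewrite in_itv/= => xM; have /andP[] := truncn_itv (ltac:(lra) : 0 <= M - x).
by exists (Num.trunc (M - x)) => //=; rewrite in_itv/= -natr1; apply/andP; split; lra.
Qed.

Lemma trivIset_unit_itv_below (M : R) :
  trivIset setT (fun j => `](M - j.+1%:R), (M - j%:R)]%classic : set R).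
Proof.
suff disj i j : (i < j)%N -> `](M - i.+1%:R), (M - i%:R)]%classic `&`
    `](M - j.+1%:R), (M - j%:R)]%classic = set0 :> set R.
  move=> i j _ _ /set0P/eqP; case: (ltngtP i j) => [/disj|/disj|//]; first by [].
  by rewrite setIC.
move=> /(ltn_addr 0) ij; apply/seteqP; split => // x []; rewrite /= !in_itv/=.
have : i.+1%:R <= j%:R :> R by rewrite ler_nat addn0 in ij *.
rewrite -!natr1; lra.
Qed.

Lemma measurable_lattice_sum_below (h : R -> \bar R) (M : R) (D : set R) :
  measurable_fun [set: R] h -> (forall x, (0 <= h x)%E) ->
  measurable_fun D (lattice_sum_below h M).
Proof.
move=> mh h0; apply: (@ge0_emeasurable_sum _ _ _ D
  (fun j u => h (u + (M - j.+1%:R))%R) xpredT) => // j _.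
exact: measurable_comp_addr.
Qed.

Lemma integral_lattice_sum_below (h : R -> \bar R) (M : R) :
  measurable_fun [set: R] h -> (forall x, (0 <= h x)%E) ->
  (\int[mu]_(u in `]0%R, 1%R]) lattice_sum_below h M u = \int[mu]_(x in `]-oo, M]) h x)%E.
Proof.
move=> mh h0; rewrite integral_nneseries//; last by move=> j; exact: measurable_comp_addr.
under eq_eseriesr => j _.
  rewrite ge0_integral_translate// add0r (_ : 1 + _ = M - j%:R); last by rewrite -natr1; ring.
  over.
rewrite -bigcup_unit_itv_below -ge0_integral_bigcup//; last exact: trivIset_unit_itv_below.
exact: measurable_funS mh.
Qed.

Lemma esum_int_translates (h : R -> \bar R) (M : int) (u : R) :
  (forall x, (0 <= h x)%E) -> (forall x, M%:~R < x -> h x = 0%E) -> 0 < u ->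
  \esum_(n in [set: int]) h (n%:~R + u) = lattice_sum_below h M%:~R u.
Proof.
move=> h0 hM u0.
have -> : \esum_(n in [set: int]) h (n%:~R + u) =
          \esum_(n in [set n : int | n < M]) h (n%:~R + u).
  rewrite [RHS]esum_mkcond; apply: eq_esum => n _.
  have [nM|Mn] := ltP n M; first by rewrite mem_set.
  rewrite memNset ?hM//=; last by rewrite ltNge Mn.
  have : M%:~R <= n%:~R :> R by rewrite ler_int.
  lra.
rewrite (reindex_esum [set: nat] _ (fun j : nat => M - j.+1%:Z)).
  rewrite /lattice_sum_below nneseries_esumT//; apply: eq_esum => j _.
  by congr h; rewrite intrB -[j.+1%:Z%:~R]/(j.+1%:R); ring.
split=> [j _ /=|i j _ _ /=|n /= nM]; [lia|lia|].
by exists `|(M - 1 - n)%R|%N => //; lia.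
Qed.

Lemma esum_int_parity (g : int -> \bar R) : (forall n, (0 <= g n)%E) ->
  \esum_(k in [set: int]) g k =
  (\esum_(n in [set: int]) g (n * 2)%R + \esum_(n in [set: int]) g (n * 2 + 1)%R)%E.
Proof.
move=> g0; rewrite (esumID [set k : int | (k %% 2)%Z = 0]) ?setTI; last by move=> *.
congr (_ + _)%E.
- rewrite (reindex_esum [set: int] _ (fun n : int => n * 2)) //.
  split=> [n _|i j _ _ /= /mulIf|k /= k0]; [by rewrite /= modzMl|exact|].
  by exists (k %/ 2)%Z => //; rewrite [RHS](divz_eq k 2) k0 addr0.
- rewrite (reindex_esum [set: int] _ (fun n : int => n * 2 + 1)) //.
  split=> [n _|i j _ _ /= /addIr /mulIf|k /= k1]; [by rewrite /= modzMDl|exact|].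
  by exists (k %/ 2)%Z => //; lia.
Qed.

Lemma measurable_EFin_nondecreasing (G : R -> R) (D : set R) :
  {homo G : x y / x <= y} -> measurable_fun D (fun t => (G t)%:E).
Proof.
move=> G_nd; apply/measurable_EFinP.
exact: measurable_funS measurableT (@subsetT _ _) (nondecreasing_measurable measurableT G_nd).
Qed.

Lemma cut_ge0 (G : R -> R) (a x : R) : (forall x, 0 < G x) -> (0 <= cut G a x)%E.
Proof. by move=> G0; apply: erestrict_ge0 => t _; rewrite lee_fin ltW. Qed.

Lemma cut_eq0 (G : R -> R) (a x : R) : a < x -> cut G a x = 0%E.
Proof. by move=> ax; rewrite /patch ifF //; apply/negP; rewrite inE /= in_itv /=; lra. Qed.

Lemma measurable_cut (G : R -> R) (a : R) :
  {homo G : x y / x <= y} -> measurable_fun [set: R] (cut G a).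
Proof.
by move=> G_nd; apply/(measurable_restrictT _ _).1 => //; exact: measurable_EFin_nondecreasing.
Qed.

Lemma integral_lattice_sum_cut (G : R -> R) (a M : R) :
  {homo G : x y / x <= y} -> (forall x, 0 < G x) -> a <= M ->
  (\int[mu]_(u in `]0%R, 1%R]) lattice_sum_below (cut G a) M u =
   \int[mu]_(x in `]-oo, a]) (G x)%:E)%E.
Proof.
move=> G_nd G0 aM; rewrite integral_lattice_sum_below; last 2 first.
- exact: measurable_cut.
- by move=> x; exact: cut_ge0.
rewrite -integral_mkcondr; congr (integral _ _ _).
by apply: setIidr => x /=; rewrite !in_itv/= => xa; exact: le_trans xa aM.
Qed.

End lattice_sums.

Section nondecreasing_profiles.
Variable R : realType.
Local Notation mu := (@lebesgue_measure R).

Lemma ge_integral_ge1_on_pos (G : R -> R) (x z : R) : {homo G : x y / x <= y} ->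
  (forall t, 0 <= G t) -> (forall t, 0 < t -> 1 <= G t) -> 0 < x -> x <= z ->
  (x%:E <= \int[mu]_(t in `]-oo, z]) (G t)%:E)%E.
Proof.
move=> G_nd G0 G1 x0 xz.
apply: (@le_trans _ _ (\int[mu]_(t in `]0%R, x]) (G t)%:E)%E); last first.
  apply: ge0_subset_integral => //; first exact: measurable_EFin_nondecreasing.
    by move=> t _; rewrite lee_fin.
  by move=> t /=; rewrite !in_itv/= => /andP[_ tx]; exact: le_trans tx xz.
apply: (@le_trans _ _ (\int[mu]_(t in `]0%R, x]) (cst 1%E) t)%E).
  by rewrite integral_cst//= lebesgue_measure_itv/= lte_fin x0 sube0 mul1e.
apply: ge0_le_integral => //; first exact: measurable_EFin_nondecreasing.
by move=> t; rewrite /= in_itv/= lee_fin => /andP[/G1].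
Qed.

Lemma integral_itvNy_bounded_below (G : R -> R) (c x : R) : {homo G : x y / x <= y} ->
  0 < c -> (forall t, c <= G t) -> (\int[mu]_(t in `]-oo, x]) (G t)%:E = +oo)%E.
Proof.
move=> G_nd c0 cG; apply/eqP; rewrite -leye_eq.
apply: (@le_trans _ _ (\int[mu]_(t in `]-oo, x]) (cst c%:E) t)%E).
  by rewrite integral_cst//= lebesgue_measure_itv/= ltNye gt0_muley ?lte_fin.
apply: ge0_le_integral => //; first by move=> t _; rewrite lee_fin ltW.
  exact: measurable_EFin_nondecreasing.
by move=> t _; rewrite lee_fin.
Qed.

Lemma nondecreasing_level_sup (G : R -> R) (c B : R) :
  {homo G : x y / x <= y} -> left_continuous G ->
  (exists x, G x < c) -> (forall x, G x < c -> x <= B) ->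
  exists a, (forall x, G x < c -> x <= a) /\ G a <= c.
Proof.
move=> G_nd G_lc [x0 Gx0] GB; pose S := [set x | G x < c].
have supS : has_sup S by split; [exists x0 | exists B => x /GB].
exists (sup S); split=> [x Sx|]; first exact: sup_upper_bound.
(* G (sup S) is a left limit of values G t < c. *)
apply: (closed_cvg (fun r => r <= c)) (G_lc (sup S)); first exact: closed_le.
near=> t.
have tS : 0 < sup S - t by rewrite subr_gt0; near: t; exact: nbhs_left_lt.
have [s Ss ts] := sup_adherent tS supS.
rewrite opprB addrC subrK in ts.
exact/ltW/(le_lt_trans (G_nd _ _ (ltW ts))).
Unshelve. all: by end_near.
Qed.

Lemma integrable_level_sup (G : R -> R) (rho c : R) :
  {homo G : x y / x <= y} -> left_continuous G -> 0 < rho -> 0 < c ->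
  (\int[mu]_(t in `]-oo, 0%R]) (G t)%:E != +oo)%E -> (forall x, 0 < x -> x <= rho * G x) ->
  exists a, (forall x, G x < c -> x <= a) /\ G a <= c.
Proof.
move=> G_nd G_lc rho0 c0 Gfin idG; apply: (nondecreasing_level_sup (B := rho * c)) => //.
  apply/not_existsP => Gc; move/negP: Gfin; apply.
  by rewrite (integral_itvNy_bounded_below _ G_nd c0)// => t; rewrite leNgt; apply/negP/Gc.
move=> x Gx; have [x0|x0] := leP x 0; first by have := mulr_gt0 rho0 c0; lra.
by apply: le_trans (idG x x0) _; rewrite ler_wpM2l ?ltW.
Qed.

Lemma lee_robust_cost (rho g t : R) (C : \bar R) :
  0 <= rho -> (C <= (rho * g)%:E)%E -> g <= t ->
  (t%:E + 2%:E * C <= ((1 + 2 * rho) * t)%:E)%E.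
Proof.
move=> rho0 Cg gt; apply: le_trans (leeD2l _ (lee_wpmul2l _ Cg)) _ => //.
rewrite -EFinM -EFinD lee_fin.
have : rho * g <= rho * t by rewrite ler_wpM2l.
nra.
Qed.

End nondecreasing_profiles.

Section driven_strategy.
Variables (R : realType) (Gp Gm : R -> R).
Hypotheses (Gp_nd : {homo Gp : x y / x <= y}) (Gm_nd : {homo Gm : x y / x <= y}).
Hypotheses (Gp_gt0 : forall x, 0 < Gp x) (Gm_gt0 : forall x, 0 < Gm x).
Local Notation mu := (@lebesgue_measure R).

Lemma before_hit_le (y : int -> R) (T : R) (m n : int) :
  m <= n -> before_hit y T n -> before_hit y T m.
Proof. by move=> mn yn k km; apply: yn; exact: le_trans km mn. Qed.

Lemma driven_seq_even (u : R) (n : int) : driven_seq Gp Gm u (n * 2) = Gp (n%:~R + u).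
Proof.
rewrite /driven_seq (_ : ((n * 2) %% 2)%Z = 0); last by lia.
by rewrite eqxx (_ : ((n * 2) %/ 2)%Z = n) //; lia.
Qed.

Lemma driven_seq_odd (u : R) (n : int) : driven_seq Gp Gm u (n * 2 + 1) = - Gm (n%:~R + u).
Proof.
rewrite /driven_seq (_ : ((n * 2 + 1) %% 2)%Z = 1); last by lia.
by rewrite (_ : ((n * 2 + 1) %/ 2)%Z = n) //; lia.
Qed.

Lemma not_finds_even (u T : R) (n : int) : 0 < T ->
  ~ finds (driven_seq Gp Gm u) T (n * 2) -> Gp (n%:~R + u) < T.
Proof.
move=> T0 nf; rewrite ltNge; apply/negP => TG; apply: nf.
by rewrite /finds driven_seq_even !gtr0_sg // (gtr0_norm T0) gtr0_norm.
Qed.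

Lemma not_finds_odd (u T : R) (n : int) : T < 0 ->
  ~ finds (driven_seq Gp Gm u) T (n * 2 + 1) -> Gm (n%:~R + u) < - T.
Proof.
move=> T0 nf; rewrite ltNge; apply/negP => TG; apply: nf.
rewrite /finds driven_seq_odd normrN (gtr0_norm (Gm_gt0 _)) (ltr0_norm T0).
by rewrite (ltr0_sg T0) ltr0_sg // oppr_lt0.
Qed.

Lemma det_cost_driven_le (u T ap am : R) :
  (forall n, before_hit (driven_seq Gp Gm u) T (n * 2) -> n%:~R + u <= ap) ->
  (forall n, before_hit (driven_seq Gp Gm u) T (n * 2 + 1) -> n%:~R + u <= am) ->
  (det_cost (driven_seq Gp Gm u) T <= `|T|%:E + 2%:E *
    (\esum_(n in [set: int]) cut Gp ap (n%:~R + u)%R +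
     \esum_(n in [set: int]) cut Gm am (n%:~R + u)%R))%E.
Proof.
move=> even_le odd_le; apply: leeD2l; apply: lee_wpmul2l => //.
rewrite esum_mkcond [leLHS]esum_int_parity; last by move=> k; case: ifP.
apply: leeD; apply: le_esum => n _; case: ifPn => [/set_mem nB|_]; try exact: cut_ge0.
- by rewrite driven_seq_even gtr0_norm // /patch mem_set //= in_itv /= even_le.
- by rewrite driven_seq_odd normrN gtr0_norm // /patch mem_set //= in_itv /= odd_le.
Qed.

Lemma driven_cost_le (T ap am : R) :
  (forall u, 0 < u <= 1 -> forall n,
     before_hit (driven_seq Gp Gm u) T (n * 2) -> n%:~R + u <= ap) ->
  (forall u, 0 < u <= 1 -> forall n,
     before_hit (driven_seq Gp Gm u) T (n * 2 + 1) -> n%:~R + u <= am) ->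
  (driven_cost Gp Gm T <= `|T|%:E + 2%:E *
     (\int[mu]_(x in `]-oo, ap]) (Gp x)%:E + \int[mu]_(x in `]-oo, am]) (Gm x)%:E))%E.
Proof.
move=> even_le odd_le.
pose M := Num.ceil (Num.max ap am).
have apM : ap <= M%:~R by apply: le_trans (ceil_ge _); rewrite le_max lexx.
have amM : am <= M%:~R by apply: le_trans (ceil_ge _); rewrite le_max lexx orbT.
pose S (G : R -> R) (a u : R) := lattice_sum_below (cut G a) M%:~R u.
have S_ge0 (G : R -> R) : (forall x, 0 < G x) -> forall a u, (0 <= S G a u)%E.
  by move=> G0 a u; apply: nneseries_ge0 => *; exact: cut_ge0.
have mS (G : R -> R) : {homo G : x y / x <= y} -> (forall x, 0 < G x) ->
    forall a, measurable_fun (`]0%R, 1%R]%classic : set R) (S G a).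
  move=> G_nd G0 a; apply: measurable_lattice_sum_below; first exact: measurable_cut.
  by move=> x; exact: cut_ge0.
have Sp_ge0 := S_ge0 Gp Gp_gt0 ap; have Sm_ge0 := S_ge0 Gm Gm_gt0 am.
have mSp := mS Gp Gp_nd Gp_gt0 ap; have mSm := mS Gm Gm_nd Gm_gt0 am.
apply: (le_trans (@ge0_le_integral_nonmeasurable _ _ _ mu _ _
  (fun u => `|T|%:E + 2%:E * (S Gp ap u + S Gm am u))%E _ _)).
- by move=> u _; rewrite adde_ge0 // mule_ge0 // esum_ge0.
- move=> u; rewrite /= in_itv/= => /andP[u0 u1].
  rewrite /S -!esum_int_translates //; try by move=> x; exact: cut_ge0.
  + by apply: det_cost_driven_le => n; [apply: even_le | apply: odd_le]; rewrite ?u0.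
  + by move=> x Mx; apply: cut_eq0; exact: le_lt_trans amM Mx.
  + by move=> x Mx; apply: cut_eq0; exact: le_lt_trans apM Mx.
rewrite ge0_integralD //; last 2 first.
- by move=> u _; rewrite mule_ge0 // adde_ge0.
- exact/measurable_funeM/emeasurable_funD.
rewrite ge0_integralZl //; last 2 first.
- exact: emeasurable_funD.
- by move=> u _; rewrite adde_ge0.
rewrite ge0_integralD // !integral_lattice_sum_cut // integral_cst //=.
by rewrite lebesgue_measure_itv /= lte_fin ltr01 sube0 mule1.
Qed.

Hypothesis Gp_ge1 : forall x, 0 < x -> 1 <= Gp x.

Lemma driven_consistent (chi : R) : (Cplus Gp Gm 0 <= chi%:E)%E ->
  (driven_cost Gp Gm 1 <= (1 + 2 * chi)%:E)%E.
Proof.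
move=> Cplus0_le.
have even_le u n : before_hit (driven_seq Gp Gm u) 1 (n * 2) -> n%:~R + u <= 0.
  move=> nB; rewrite leNgt; apply/negP => /Gp_ge1.
  by rewrite leNgt (not_finds_even ltr01 (nB _ (lexx _))).
apply: le_trans (driven_cost_le (ap := 0) (am := 0) _ _) _ => [u _ n|u _ n nB|].
- exact: even_le.
- by apply: even_le; apply: before_hit_le nB; lia.
- by rewrite normr1; apply: le_trans (leeD2l _ (lee_wpmul2l _ Cplus0_le)) _.
Qed.

Section excursion_profile.
Variable rho : R.
Hypotheses (Gp_lc : left_continuous Gp) (Gm_lc : left_continuous Gm).
Hypothesis Cplus_le : forall x, (Cplus Gp Gm x <= (rho * Gp x)%:E)%E.
Hypothesis Cminus_le : forall x, (Cminus Gp Gm x <= (rho * Gm x)%:E)%E.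
Hypothesis rho_gt0 : 0 < rho.

Lemma integral_Gp_le (x : R) : (\int[mu]_(t in `]-oo, x]) (Gp t)%:E <= (rho * Gp x)%:E)%E.
Proof.
apply: le_trans (Cplus_le x); rewrite /Cplus leeDl //.
by apply: integral_ge0 => t _; rewrite lee_fin ltW.
Qed.

Lemma integral_Gm_le (x : R) : (\int[mu]_(t in `]-oo, x]) (Gm t)%:E <= (rho * Gm x)%:E)%E.
Proof.
apply: le_trans (Cminus_le x); rewrite /Cminus leeDr //.
by apply: integral_ge0 => t _; rewrite lee_fin ltW.
Qed.

Lemma le_rho_Gp (x : R) : 0 < x -> x <= rho * Gp x.
Proof.
move=> x0; rewrite -lee_fin; apply: le_trans (integral_Gp_le x).
by apply: ge_integral_ge1_on_pos => // t; exact: ltW.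
Qed.

Lemma le_rho_Gm (x : R) : 0 < x -> x <= rho * Gm x.
Proof.
move=> x0; rewrite -lee_fin; apply: le_trans (Cminus_le x); rewrite /Cminus.
apply: le_trans (leeDl _ _); last by apply: integral_ge0 => t _; rewrite lee_fin ltW.
have Gp_ge0 t : 0 <= Gp t by exact: ltW.
by apply: ge_integral_ge1_on_pos => //; lra.
Qed.

Lemma level_sup_Gp (c : R) : 0 < c ->
  exists a, (forall x, Gp x < c -> x <= a) /\ Gp a <= c.
Proof.
move=> c0; apply: integrable_level_sup rho_gt0 c0 _ le_rho_Gp => //.
by rewrite -ltey; apply: le_lt_trans (integral_Gp_le 0) (ltry _).
Qed.

Lemma level_sup_Gm (c : R) : 0 < c ->
  exists a, (forall x, Gm x < c -> x <= a) /\ Gm a <= c.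
Proof.
move=> c0; apply: integrable_level_sup rho_gt0 c0 _ le_rho_Gm => //.
by rewrite -ltey; apply: le_lt_trans (integral_Gm_le 0) (ltry _).
Qed.

Lemma driven_robust_pos (T : R) : 0 < T ->
  (driven_cost Gp Gm T <= ((1 + 2 * rho) * `|T|)%:E)%E.
Proof.
move=> T0; have [a [below Ga]] := level_sup_Gp T0.
have even_le u n : before_hit (driven_seq Gp Gm u) T (n * 2) -> n%:~R + u <= a.
  by move=> nB; apply/below/(not_finds_even T0)/nB.
apply: le_trans (driven_cost_le (ap := a) (am := a) _ _) _ => [u _ n|u _ n nB|].
- exact: even_le.
- by apply: even_le; apply: before_hit_le nB; lia.
- by apply: lee_robust_cost (Cplus_le a) _; [exact: ltW | rewrite gtr0_norm].
Qed.

Lemma driven_robust_neg (T : R) : T < 0 ->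
  (driven_cost Gp Gm T <= ((1 + 2 * rho) * `|T|)%:E)%E.
Proof.
move=> T0; have [a [below Ga]] : exists a, (forall x, Gm x < - T -> x <= a) /\ Gm a <= - T.
  by apply: level_sup_Gm; rewrite oppr_gt0.
have odd_le u n : before_hit (driven_seq Gp Gm u) T (n * 2 + 1) -> n%:~R + u <= a.
  by move=> nB; apply/below/(not_finds_odd T0)/nB.
apply: le_trans (driven_cost_le (ap := a + 1) (am := a) _ _) _ => [u _ n nB|u _ n|].
- have nB' : before_hit (driven_seq Gp Gm u) T ((n - 1) * 2 + 1).
    by apply: before_hit_le nB; lia.
  by have := odd_le u _ nB'; rewrite intrB mulr1z; lra.
- exact: odd_le.
- by apply: lee_robust_cost (Cminus_le a) _; [exact: ltW | rewrite ltr0_norm].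
Qed.

End excursion_profile.

End driven_strategy.

Unset Implicit Arguments.

Theorem lemma4 (R : realType) (rho chi : R) (Gp Gm : R -> R) :
  0 < chi -> chi <= rho ->
  excursion_profile rho chi Gp Gm ->
  robust (driven_cost Gp Gm) (1 + 2 * rho) /\
  consistent (driven_cost Gp Gm) (1 + 2 * chi).
Proof.
move=> chi_gt0 chi_le_rho [[Gp_nd Gm_nd] [[Gp_lc Gm_lc] [[Gp_gt0 Gm_gt0] [[Gp_ge1 _]]]]].
move=> [C_le C0_le].
have rho_gt0 : 0 < rho by exact: lt_le_trans chi_le_rho.
have Cplus_le x := (C_le x).1.
have Cminus_le x := (C_le x).2.
split; last exact: driven_consistent.
move=> T; rewrite neq_lt => /orP[T_lt0|T_gt0].
- exact: driven_robust_neg.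
- exact: driven_robust_pos.
Qed.
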